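(* Let $d\ge2$, let $u_1,\dots,u_\ell$ be an enumeration of the elementary matrices $I+E_{ij}$ ($i\ne j$) in $\operatorname{SL}_d(\mathbb{Z})$, extended cyclically by $u_m=u_{m\bmod \ell}$, and for $N\ge1$ let $\Gamma_N=\{u_1^{k_1}\cdots u_N^{k_N}:k_i\in\mathbb{Z}\}$, acting on $\mathfrak{sl}_d(\mathbb{Z})$ by conjugation. Then there exist constants $Q,N<\infty$ such that for every companion matrix $c_p\in\mathfrak{sl}_d(\mathbb{Z})$ (i.e. $p$ a monic integer polynomial of degree $d$ with vanishing $t^{d-1}$-coefficient), the set $\Gamma_Nc_p=\{\gamma c_p\gamma^{-1}:\gamma\in\Gamma_N\}$ is $Q$-coset fleeing in $\mathfrak{sl}_d(\mathbb{Z})$ and hyperplane-fleeing in $\mathfrak{sl}_d(\mathbb{R})$.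
   Context: $E_{ij}$ is the matrix unit with $1$ in position $(i,j)$. $\mathfrak{sl}_d(\mathbb{Z})$ is the additive group of integer $d\times d$ trace-zero matrices. Companion matrix: for $p(t)=a_0+a_1t+\dots+a_{d-1}t^{d-1}+t^d$, $c_p$ has $1$'s on the subdiagonal, last column $(-a_0,\dots,-a_{d-1})^T$, and zeros elsewhere. For an abelian group $\Lambda$, $S\subset\Lambda$ is $Q$-coset fleeing if for every subgroup $W\le\Lambda$ of index $>Q$, $S$ is not contained in a coset of $W$. A subset of a real vector space is hyperplane-fleeing if it is not contained in any proper affine subspace. *)

From HB Require Import structures.
From mathcomp Require Import all_boot all_order all_algebra.
From mathcomp Require Import reals.
Set Implicit Arguments. Unset Strict Implicit. Unset Printing Implicit Defensive.
Import Order.TTheory GRing.Theory Num.Theory.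
Local Open Scope ring_scope.

(* Companion matrix of p(t) = a_0 + ... + a_{d-1} t^{d-1} + t^d (p monic of
   degree d): 1's on the subdiagonal, last column (-a_0,...,-a_{d-1})^T. *)
Definition companion (d : nat) (p : {poly int}) : 'M[int]_d :=
  \matrix_(i < d, j < d)
    if (j : nat) == d.-1 then - p`_i else ((i : nat) == j.+1)%:R.

(* The (0-indexed) k-th matrix of the cyclically extended enumeration:
   u_{k+1} = I + E_{ij} with (i,j) = s_{(k mod l)}, l = size s.  Here d = n.+2. *)
Definition elem_u (n : nat) (s : seq ('I_n.+2 * 'I_n.+2)) (k : nat)
  : 'M[int]_n.+2 :=
  let ij := nth (ord0, ord0) s (k %% size s) in 1 + delta_mx ij.1 ij.2.

(* u_1^{a_1} ... u_N^{a_N}, with integer exponents (ring inverse in SL_d(Z)). *)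
Definition gammaN (n : nat) (s : seq ('I_n.+2 * 'I_n.+2)) (N : nat)
  (a : 'I_N -> int) : 'M[int]_n.+2 :=
  \prod_(k < N) (elem_u s k) ^ (a k).

Definition GammaN_orbit (n : nat) (s : seq ('I_n.+2 * 'I_n.+2)) (N : nat)
  (c : 'M[int]_n.+2) : 'M[int]_n.+2 -> Prop :=
  fun M => exists a : 'I_N -> int, M = gammaN s a * c * (gammaN s a)^-1.

Definition in_sl (d : nat) (A : 'M[int]_d) : Prop := \tr A = 0.

Definition is_subgroup_sl (d : nat) (W : 'M[int]_d -> Prop) : Prop :=
  (forall x, W x -> in_sl x) /\ W 0 /\ (forall x y, W x -> W y -> W (x - y)).

(* The index [sl_d(Z) : W] is > Q (possibly infinite): there are Q+1
   pairwise distinct cosets of W in sl_d(Z). *)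
Definition index_gt (d : nat) (W : 'M[int]_d -> Prop) (Q : nat) : Prop :=
  exists f : 'I_Q.+1 -> 'M[int]_d,
    (forall i, in_sl (f i)) /\ (forall i j, i != j -> ~ W (f i - f j)).

Definition in_coset (d : nat) (S W : 'M[int]_d -> Prop) : Prop :=
  exists x, in_sl x /\ forall y, S y -> W (y - x).

Definition coset_fleeing (d : nat) (Q : nat) (S : 'M[int]_d -> Prop) : Prop :=
  forall W, is_subgroup_sl W -> index_gt W Q -> ~ in_coset S W.

(* Hyperplane-fleeing in sl_d(R): the image of S in sl_d(R) is not contained
   in any proper affine subspace x + V (V a proper linear subspace of sl_d(R),
   x in sl_d(R)). *)
Definition hyperplane_fleeing (R : realType) (d : nat) (S : 'M[int]_d -> Prop)
  : Prop :=
  ~ exists (V : {vspace 'M[R]_d}) (x : 'M[R]_d),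
      (forall v, v \in V -> \tr v = 0) /\
      (exists y : 'M[R]_d, \tr y = 0 /\ y \notin V) /\
      \tr x = 0 /\
      (forall A, S A -> map_mx (fun z : int => z%:~R) A - x \in V).

From HB Require Import structures.
From mathcomp Require Import all_boot all_order all_algebra.
From mathcomp Require Import reals.
From mathcomp Require Import ring zify.
Import Order.TTheory GRing.Theory Num.Theory.
Local Open Scope ring_scope.
Set Implicit Arguments. Unset Strict Implicit.

(* Call a product u_1^k_1 ... u_(l t)^k_(l t) of t full rounds of the
   enumeration a "t-round" element.  Suppose the orbit lies in a coset of an
   additive subgroup W, so that W contains all differences of orbit points.
   Say X is t-stable if g X g^-1 lies in W for every t-round g.  Conjugating
   by a single elementary matrix e = I + E_ij costs one round, so if X is
   (t+1)-stable then so is e X e^-1 - X = E_ij X - X E_ij - E_ij X E_ij at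
   level t.  Starting from the orbit itself, adding the steps for I + E_ij
   and I - E_ij gives 2 c_ji E_ij; since c_(d,d-1) = 1 this makes 2 E_(d-1,d)
   6-stable, and six further steps spread it to 2 E_xy (x <> y) and
   2 (E_xx - E_dd).  These elements generate 2 sl_d(Z), so W has index at
   most 2^(d*d) (pigeonhole on the parities of the entries); for a real
   subspace the same elements span all of sl_d(R). *)

Definition add_subgroup (V : zmodType) (W : V -> Prop) :=
  W 0 /\ forall x y, W x -> W y -> W (x - y).

Section AddSubgroup.
Variables (V : zmodType) (W : V -> Prop).
Hypothesis W_sub : add_subgroup W.

Lemma subgroup0 : W 0. Proof. by case: W_sub. Qed.

Lemma subgroupB x y : W x -> W y -> W (x - y).
Proof. by case: W_sub => _; apply. Qed.

Lemma subgroupN x : W x -> W (- x).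
Proof. by move=> Wx; rewrite -sub0r; apply: subgroupB => //; apply: subgroup0. Qed.

Lemma subgroupD x y : W x -> W y -> W (x + y).
Proof. by move=> Wx Wy; rewrite -[y]opprK; apply: subgroupB => //; apply: subgroupN. Qed.

Lemma subgroup_sum I (r : seq I) (F : I -> V) :
  (forall i, W (F i)) -> W (\sum_(i <- r) F i).
Proof. by move=> WF; apply: big_ind => //; [exact: subgroup0 | exact: subgroupD]. Qed.

Lemma subgroup_mulz x k : W x -> W (x *~ k).
Proof.
move=> Wx; have W_mulrn m : W (x *+ m).
  by elim: m => [|m IHm]; [rewrite mulr0n; apply: subgroup0 | rewrite mulrS; apply: subgroupD].
by case: k => m; [exact: W_mulrn | rewrite NegzE mulrNz; apply/subgroupN/W_mulrn].
Qed.

Lemma subgroup_even x (a : int) : W (x *+ 2) -> (2 %| a)%Z -> W (x *~ a).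
Proof.
by move=> W2x /divzK <-; rewrite -mulrzA_C -pmulrn; apply: subgroup_mulz.
Qed.

Lemma subgroup_coset_diff x a b : W (a - x) -> W (b - x) -> W (a - b).
Proof.
move=> Wa Wb; have -> : a - b = (a - x) - (b - x) by rewrite opprB addrA subrK.
exact: subgroupB.
Qed.

End AddSubgroup.

Lemma add_subgroup_preim (U V : zmodType) (phi : U -> V) (W : V -> Prop) :
  {morph phi : a b / a - b} -> add_subgroup W -> add_subgroup (fun a => W (phi a)).
Proof.
move=> phiB [W0 WB]; split=> [|a b Wa Wb]; last by rewrite phiB; apply: WB.
by rewrite -(subrr 0) phiB subrr.
Qed.

Lemma delta_mul (R : pzRingType) d (a b c e : 'I_d) :
  delta_mx a b * delta_mx c e = delta_mx a e *+ (b == c) :> 'M[R]_d.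
Proof. by rewrite -mulmxE mul_delta_mx_cond. Qed.

Lemma delta_sqr0 (R : pzRingType) d (i j : 'I_d) : i != j ->
  delta_mx i j * delta_mx i j = 0 :> 'M[R]_d.
Proof. by move=> ij; rewrite delta_mul eq_sym (negbTE ij) mulr0n. Qed.

Lemma delta_sandwich (R : pzRingType) d (i j : 'I_d) (A : 'M[R]_d) :
  delta_mx i j * A * delta_mx i j = A j i *: delta_mx i j.
Proof.
apply/matrixP => u v; rewrite -!mulmxE !mxE (bigD1 i) //= big1; last first.
  by move=> k /negbTE ki; rewrite !mxE ki mulr0.
rewrite !mxE eqxx /= (bigD1 j) //= big1; last first.
  by move=> k /negbTE kj; rewrite !mxE kj andbF mul0r.
rewrite !mxE eqxx andbT !addr0.
by case: (u == i); case: (v == j); rewrite /= ?mulr1 ?mulr0 ?mul1r ?mul0r.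
Qed.

Lemma sqr0_unit (R : unitRingType) (x : R) : x * x = 0 ->
  1 + x \is a GRing.unit /\ (1 + x)^-1 = 1 - x.
Proof.
move=> xx0.
have inv_l : (1 - x) * (1 + x) = 1 by rewrite mulrBl mul1r mulrDr mulr1 xx0 addr0 addrK.
have inv_r : (1 + x) * (1 - x) = 1 by rewrite mulrDl mul1r mulrBr mulr1 xx0 subr0 subrK.
have unit_x : 1 + x \is a GRing.unit by apply/unitrP; exists (1 - x).
by split=> //; rewrite -(mulKr unit_x (1 - x)) inv_r mulr1.
Qed.

Lemma sqr0_conj_sub (R : unitRingType) (x X : R) : x * x = 0 ->
  (1 + x) * X * (1 + x)^-1 - X = x * X - X * x - x * X * x.
Proof.
move=> /sqr0_unit[_ ->].
by rewrite mulrBr mulr1 !mulrDl !mul1r [X + _]addrC addrAC addrK opprD addrA.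
Qed.

Section Rounds.
Variables (n : nat) (s : seq ('I_n.+2 * 'I_n.+2)).
Hypothesis s_pairs : forall i j : 'I_n.+2, ((i, j) \in s) = (i != j).

(* Since the enumeration is cyclic of period l = size s, exponent vectors can be
   concatenated as soon as the first one has length a multiple of l. *)
Lemma gammaN_cat N1 N2 N (a1 : 'I_N1 -> int) (a2 : 'I_N2 -> int) :
  (N1 %% size s = 0)%N -> (N1 + N2)%N = N ->
  exists a : 'I_N -> int, gammaN s a = gammaN s a1 * gammaN s a2.
Proof.
move=> N1_period <-.
exists (fun k => match split k with inl i => a1 i | inr j => a2 j end).
rewrite /gammaN big_split_ord /=; congr (_ * _); apply: eq_bigr => i _.
  by rewrite -[lshift _ _]/(unsplit (inl i)) unsplitK.
rewrite -[rshift _ _]/(unsplit (inr i)) unsplitK.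
by rewrite /elem_u /= -modnDml N1_period add0n.
Qed.

Definition in_rounds t (g : 'M[int]_n.+2) :=
  exists a : 'I_(size s * t) -> int, g = gammaN s a.

Lemma in_rounds1 t : in_rounds t 1.
Proof. by exists (fun _ => 0); rewrite /gammaN big1 // => i _; exact: expr0z. Qed.

Lemma in_roundsM t g e : in_rounds t g -> in_rounds 1 e -> in_rounds t.+1 (g * e).
Proof.
move=> [a1 ->] [a2 ->].
have len : (size s * t + size s * 1)%N = (size s * t.+1)%N by rewrite -mulnDr addn1.
have [a <-] := gammaN_cat a1 a2 (modnMr _ _) len.
by exists a.
Qed.

Lemma in_rounds_elem i j (k : int) : i != j -> in_rounds 1 ((1 + delta_mx i j) ^ k).
Proof.
rewrite -s_pairs => ij_s.
have ij_lt : (index (i, j) s < size s * 1)%N by rewrite muln1 index_mem.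
exists (fun x => if x == Ordinal ij_lt then k else 0).
rewrite /gammaN (eq_bigr (fun x => if x == Ordinal ij_lt then
    elem_u s (Ordinal ij_lt) ^ k else 1)); last first.
  by move=> x _; case: eqP => [->|_] //; rewrite expr0z.
rewrite -big_mkcond big_pred1_eq /elem_u /= modn_small ?nth_index //.
by rewrite -[size s]muln1.
Qed.

Lemma elem_unit i j : i != j ->
  (1 + delta_mx i j : 'M[int]_n.+2) \is a GRing.unit /\
  (1 + delta_mx i j : 'M[int]_n.+2)^-1 = 1 - delta_mx i j.
Proof. by move=> ij; apply: sqr0_unit; apply: delta_sqr0. Qed.

Lemma in_rounds_elemV i j : i != j -> in_rounds 1 (1 - delta_mx i j).
Proof.
move=> ij; have [_ <-] := elem_unit ij.
by have := in_rounds_elem (-1) ij; rewrite -invr_expz expr1z.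
Qed.

Lemma size_pairs_gt0 : (0 < size s)%N.
Proof.
have : (ord0, ord_max) \in s by rewrite s_pairs -val_eqE.
by case: s s_pairs.
Qed.

Lemma in_rounds_unit t g : in_rounds t g -> g \is a GRing.unit.
Proof.
have s_gt0 := size_pairs_gt0.
move=> [a ->]; apply: (big_ind (fun x => x \is a GRing.unit)); first exact: unitr1.
  by move=> x y ux uy; rewrite unitrMl.
move=> k _; apply: unitrXz; rewrite /elem_u.
case: (nth _ _ _) (mem_nth (ord0, ord0) (ltn_pmod k s_gt0)) => i j.
by rewrite s_pairs => /elem_unit[].
Qed.

End Rounds.

Ltac matrix_zmod := apply/matrixP => u v; rewrite !mxE; ring.

Section Stability.
Variables (n : nat) (s : seq ('I_n.+2 * 'I_n.+2)).
Hypothesis s_pairs : forall i j : 'I_n.+2, ((i, j) \in s) = (i != j).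
Variable W : 'M[int]_n.+2 -> Prop.
Hypothesis W_sub : add_subgroup W.

Definition stable t X := forall g, in_rounds s t g -> W (g * X * g^-1).

Definition orbit_diffs_in t c :=
  forall g g', in_rounds s t g -> in_rounds s t g' -> W (g * c * g^-1 - g' * c * g'^-1).

Lemma stable0 t : stable t 0.
Proof. by move=> g _; rewrite mulr0 mul0r; apply: subgroup0. Qed.

Lemma stableB t X Y : stable t X -> stable t Y -> stable t (X - Y).
Proof. by move=> sX sY g g_t; rewrite mulrBr mulrBl; apply: subgroupB; auto. Qed.

Lemma stableN t X : stable t X -> stable t (- X).
Proof. by move=> sX; rewrite -sub0r; apply: stableB => //; apply: stable0. Qed.

Lemma stableD t X Y : stable t X -> stable t Y -> stable t (X + Y).
Proof. by move=> sX sY; rewrite -[Y]opprK; apply: stableB => //; apply: stableN. Qed.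

(* Stability is inherited by fewer rounds (pad with the identity round). *)
Lemma stableS t X : stable t.+1 X -> stable t X.
Proof. by move=> sX g g_t; have := sX _ (in_roundsM g_t (in_rounds1 s 1)); rewrite mulr1. Qed.

Lemma stable_mem X : stable 0 X -> W X.
Proof. by move=> sX; have := sX _ (in_rounds1 s 0); rewrite mul1r invr1 mulr1. Qed.

Lemma stable_conj t e X : in_rounds s 1 e -> stable t.+1 X -> stable t (e * X * e^-1).
Proof.
move=> e_1 sX g g_t; have := sX _ (in_roundsM g_t e_1).
by rewrite invrM ?(in_rounds_unit s_pairs g_t) ?(in_rounds_unit s_pairs e_1) // !mulrA.
Qed.

Lemma stable_elem t i j X : i != j -> stable t.+1 X ->
  stable t (delta_mx i j * X - X * delta_mx i j - delta_mx i j * X * delta_mx i j).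
Proof.
move=> ij sX; rewrite -sqr0_conj_sub ?delta_sqr0 //.
by apply: stableB (stableS sX); apply: stable_conj (in_rounds_elem s_pairs 1 ij) sX.
Qed.

(* Stability of E_ab moves to any other row x, using I + E_xa ... *)
Lemma stable_row t a b x : x != a -> x != b ->
  stable t.+1 (delta_mx a b) -> stable t (delta_mx x b).
Proof.
move=> xa xb sE; have bx : (b == x) = false by rewrite eq_sym (negbTE xb).
have := stable_elem xa sE.
by rewrite !(delta_mul, eqxx, bx, mulr1n, mulr0n, mul0r, subr0).
Qed.

(* ... and to any other column y, using I + E_by. *)
Lemma stable_col t a b y : y != a -> y != b ->
  stable t.+1 (delta_mx a b) -> stable t (delta_mx a y).
Proof.
move=> ya yb sE; have by' : b != y by rewrite eq_sym.
have := stableN (stable_elem by' sE).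
by rewrite !(delta_mul, eqxx, (negbTE ya), mulr1n, mulr0n, mul0r, subr0, sub0r, opprK).
Qed.

Lemma stable_flip t p q : p != q -> stable t.+2 (delta_mx p q) ->
  stable t (delta_mx q p) /\ stable t (delta_mx q q - delta_mx p p).
Proof.
move=> pq sE; have qp : q != p by rewrite eq_sym.
(* The move with I + E_qp turns E_pq into E_qq - E_pp - E_qp ... *)
have sY : stable t.+1 (delta_mx q q - delta_mx p p - delta_mx q p).
  have := stable_elem qp sE.
  by rewrite !(delta_mul, eqxx, (negbTE pq), (negbTE qp), mulr1n, mulr0n, mul0r).
have sE_t : stable t (delta_mx p q) by do 2 apply: stableS.
(* ... and the move with I + E_pq turns that into E_qq - E_pp + 3 E_pq. *)
have sD : stable t (delta_mx q q - delta_mx p p).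
  have := stable_elem pq sY.
  rewrite !(mulrBl, mulrBr, delta_mul, eqxx, (negbTE pq), (negbTE qp), mulr1n, mulr0n, mul0r).
  move=> sZ; have {}sZ := stableB (stableB (stableB sZ sE_t) sE_t) sE_t.
  by apply: (eq_ind _ (stable t) sZ); matrix_zmod.
split=> //; apply: (eq_ind _ (stable t) (stableB sD (stableS sY))); matrix_zmod.
Qed.

Lemma stable_orbit t c e : orbit_diffs_in t.+1 c -> in_rounds s 1 e ->
  stable t (e * c * e^-1 - c).
Proof.
move=> Oc e_1 h h_t.
have h_t1 : in_rounds s t.+1 h by rewrite -[h]mulr1; apply: in_roundsM h_t (in_rounds1 s 1).
have := Oc _ _ (in_roundsM h_t e_1) h_t1.
rewrite invrM ?(in_rounds_unit s_pairs h_t) ?(in_rounds_unit s_pairs e_1) //.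
by rewrite mulrBr mulrBl !mulrA.
Qed.

(* Seed: conjugating c by I + E_ij and by I - E_ij and adding isolates
   -2 E_ij c E_ij = -2 c_ji E_ij. *)
Lemma stable_seed t (c : 'M[int]_n.+2) i j :
  i != j -> c j i = 1 -> orbit_diffs_in t.+1 c -> stable t (delta_mx i j *+ 2).
Proof.
move=> ij cji Oc.
have sP := stable_orbit Oc (in_rounds_elem s_pairs 1 ij).
have sM := stable_orbit Oc (in_rounds_elemV s_pairs ij).
rewrite expr1z sqr0_conj_sub ?delta_sqr0 // in sP.
rewrite sqr0_conj_sub ?mulrNN ?delta_sqr0 // in sM.
have := stableN (stableD sP sM).
rewrite !(mulNr, mulrN, opprK) delta_sandwich cji scale1r.
move: (delta_mx i j * c) (c * delta_mx i j) (delta_mx i j) => A B E sAB.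
by apply: (eq_ind _ (stable t) sAB); matrix_zmod.
Qed.

End Stability.

Definition sl_gen {R : pzRingType} {d : nat} (x y : 'I_d.+1) : 'M[R]_d.+1 :=
  if x == y then delta_mx x x - delta_mx ord_max ord_max else delta_mx x y.

Lemma traceless_decomp (R : pzRingType) d (M : 'M[R]_d.+1) : \tr M = 0 ->
  M = \sum_x \sum_y M x y *: sl_gen x y.
Proof.
move=> trM0.
have split_gen x y : M x y *: sl_gen x y =
    M x y *: delta_mx x y - (if y == x then M x x *: delta_mx ord_max ord_max else 0).
  by rewrite /sl_gen eq_sym; case: eqVneq => [->|_]; rewrite ?scalerBr ?subr0.
under eq_bigr do under eq_bigr do rewrite split_gen.
under eq_bigr do rewrite sumrB -big_mkcond big_pred1_eq.
rewrite sumrB -matrix_sum_delta -scaler_suml.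
have diag_sum0 : \sum_i M i i = 0 := trM0.
by rewrite diag_sum0 scale0r subr0.
Qed.

Lemma traceless_mem (R : pzRingType) d (W : 'M[R]_d.+1 -> Prop) M :
  add_subgroup W -> \tr M = 0 -> (forall x y, W (M x y *: sl_gen x y)) -> W M.
Proof.
move=> W_sub trM0 WM; rewrite (traceless_decomp trM0).
by apply: subgroup_sum => // x; apply: subgroup_sum => // y.
Qed.

Lemma add_subgroup_twice (V : zmodType) (W : V -> Prop) :
  add_subgroup W -> add_subgroup (fun x => W (x *+ 2)).
Proof.
by case=> W0 WB; split=> [|x y Wx Wy]; rewrite ?mul0rn ?mulrnBl //; apply: WB.
Qed.

Lemma stable_twice n (s : seq ('I_n.+2 * 'I_n.+2)) W t X :
  stable s W t (X *+ 2) -> stable s (fun Y => W (Y *+ 2)) t X.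
Proof. by move=> sX g g_t; rewrite -mulrnAl -mulrnAr; apply: sX. Qed.

Lemma twice_gens_mem n (s : seq ('I_n.+2 * 'I_n.+2)) W (c : 'M[int]_n.+2) :
  (forall i j : 'I_n.+2, ((i, j) \in s) = (i != j)) -> add_subgroup W ->
  c ord_max (inord n) = 1 -> orbit_diffs_in s W 7 c ->
  forall x y, W (sl_gen x y *+ 2).
Proof.
move=> s_pairs W_sub c_sub O7.
pose W2 Y := W (Y *+ 2); have W2_sub : add_subgroup W2 := add_subgroup_twice W_sub.
set a : 'I_n.+2 := inord n; set b : 'I_n.+2 := ord_max.
have ab : a != b by rewrite -val_eqE /= inordK // neq_ltn ltnSn.
(* Seed at position (a, b) = (d-1, d), then spread along row a, to all columns
   other than a, to all off-diagonal positions, and finally to the diagonal. *)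
have s6 : stable s W2 6 (delta_mx a b).
  by apply: stable_twice; apply: (stable_seed s_pairs W_sub ab c_sub O7).
have s5 y : y != a -> stable s W2 5 (delta_mx a y).
  move=> ya; have [->|yb] := eqVneq y b; first exact: stableS s6.
  exact: (stable_col s_pairs W2_sub ya yb s6).
have s4 x y : x != y -> y != a -> stable s W2 4 (delta_mx x y).
  move=> xy ya; have [->|xa] := eqVneq x a; first exact: stableS (s5 _ ya).
  exact: (stable_row s_pairs W2_sub xa xy (s5 _ ya)).
have s2 x y : x != y -> stable s W2 2 (delta_mx x y).
  have [->|ya] := eqVneq y a => xy; last by do 2 apply: stableS; apply: s4.
  have ax : a != x by rewrite eq_sym.
  by case: (stable_flip s_pairs W2_sub ax (s4 _ _ ax xy)).
move=> x y; apply: (@stable_mem _ s W2); rewrite /sl_gen.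
have [_|xy] := eqVneq x y; last by do 2 apply: stableS; apply: s2.
have [->|xb] := eqVneq x b; first by rewrite subrr; apply: stable0.
have bx : b != x by rewrite eq_sym.
by case: (stable_flip s_pairs W2_sub bx (s2 _ _ bx)).
Qed.

(* Ring morphisms fix the generators, whose entries are 0, 1 and -1. *)
Lemma map_sl_gen (aR rR : pzRingType) (f : {rmorphism aR -> rR}) d (x y : 'I_d.+1) :
  map_mx f (sl_gen x y) = sl_gen x y.
Proof. by rewrite /sl_gen; case: eqP => _; rewrite ?map_mxB !map_delta_mx. Qed.

Lemma coset_orbit_diffs n (s : seq ('I_n.+2 * 'I_n.+2)) (U : zmodType)
    (phi : 'M[int]_n.+2 -> U) W t c x :
  add_subgroup W -> {morph phi : A B / A - B} ->
  (forall A, GammaN_orbit s (size s * t) c A -> W (phi A - x)) ->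
  orbit_diffs_in s (fun A => W (phi A)) t c.
Proof.
move=> W_sub phiB Wx g g' [a ->] [a' ->]; rewrite phiB.
by apply: (subgroup_coset_diff W_sub (x := x)); apply: Wx; [exists a | exists a'].
Qed.

Lemma companion_subdiag n (p : {poly int}) : companion n.+2 p ord_max (inord n) = 1.
Proof. by rewrite mxE inordK //= ltn_eqF // eqxx. Qed.

Lemma orbit_coset_twice_gens n (s : seq ('I_n.+2 * 'I_n.+2)) (p : {poly int})
    (U : zmodType) (phi : 'M[int]_n.+2 -> U) W x :
  (forall i j : 'I_n.+2, ((i, j) \in s) = (i != j)) ->
  add_subgroup W -> {morph phi : A B / A - B} ->
  (forall A, GammaN_orbit s (size s * 7) (companion n.+2 p) A -> W (phi A - x)) ->
  forall u v, W (phi (sl_gen u v *+ 2)).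
Proof.
move=> s_pairs W_sub phiB Wx.
apply: (twice_gens_mem s_pairs (add_subgroup_preim phiB W_sub) (companion_subdiag n p)).
exact: coset_orbit_diffs W_sub phiB Wx.
Qed.

Lemma same_parity_dvd (a b : int) :
  ((a %% 2)%Z == 0) = ((b %% 2)%Z == 0) -> (2 %| a - b)%Z.
Proof. by rewrite -eqz_mod_dvd => same; apply/eqP; move: same; case: eqP; case: eqP; lia. Qed.

Lemma parity_pigeonhole d (f : 'I_(2 ^ (d * d)).+1 -> 'M[int]_d) :
  exists i j, i != j /\ forall x y, (2 %| f i x y - f j x y)%Z.
Proof.
pose parity i : {ffun 'I_d * 'I_d -> bool} :=
  [ffun xy : 'I_d * 'I_d => (f i xy.1 xy.2 %% 2)%Z == 0].
have /injectivePn[i [j ij same_ij]] : ~~ injectiveb parity.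
  apply/injectiveP => /leq_card.
  by rewrite card_ord card_ffun card_bool card_prod card_ord ltnn.
exists i, j; split=> // x y; apply: same_parity_dvd.
by have := congr1 (fun q : {ffun 'I_d * 'I_d -> bool} => q (x, y)) same_ij; rewrite !ffunE.
Qed.


(* The index part: W contains 2 sl_d(Z), and among 2^(d*d) + 1 cosets two have
   representatives congruent modulo 2. *)
Lemma companion_orbit_coset_fleeing n (s : seq ('I_n.+2 * 'I_n.+2)) (p : {poly int}) :
  (forall i j : 'I_n.+2, ((i, j) \in s) = (i != j)) ->
  coset_fleeing (2 ^ (n.+2 * n.+2)) (GammaN_orbit s (size s * 7) (companion n.+2 p)).
Proof.
move=> s_pairs W [_ W_sub] [f [f_sl f_W]] [x [_ Wx]].
have [i [j [ij f_even]]] := parity_pigeonhole f.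
apply: (f_W i j ij); apply: traceless_mem => // [|u v].
  by rewrite raddfB /= f_sl f_sl subrr.
have W2gen := orbit_coset_twice_gens s_pairs W_sub (fun A B => erefl) Wx u v.
rewrite -[_ u v]intz scaler_int; apply: (subgroup_even W_sub W2gen).
by rewrite !mxE; apply: f_even.
Qed.

(* The real part: a subspace V containing the orbit up to translation contains
   2 sl_gen x y for all x, y, hence all of sl_d(R). *)
Lemma companion_orbit_hyperplane_fleeing (R : realType) n (s : seq ('I_n.+2 * 'I_n.+2))
    (p : {poly int}) :
  (forall i j : 'I_n.+2, ((i, j) \in s) = (i != j)) ->
  hyperplane_fleeing R (GammaN_orbit s (size s * 7) (companion n.+2 p)).
Proof.
move=> s_pairs [V [x [_ [[y [y_sl yV]] [_ Vx]]]]]; apply: (negP yV).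
have V_sub : add_subgroup (fun X : 'M[R]_n.+2 => X \in V).
  by split=> [|X Y]; [apply: mem0v | apply: memvB].
pose phi := map_mx (fun z : int => z%:~R : R) : 'M[int]_n.+2 -> 'M[R]_n.+2.
have phiB : {morph phi : A B / A - B} by move=> A B; apply: map_mxB.
apply: (traceless_mem V_sub y_sl) => u v.
have := orbit_coset_twice_gens s_pairs V_sub phiB Vx u v.
rewrite /phi mulr2n map_mxD (map_sl_gen intr) -mulr2n => V2gen.
have two_neq0 : (2 : R) != 0 by rewrite pnatr_eq0.
by rewrite -[y u v](mulfVK two_neq0) -scalerA scaler_nat memvZ.
Qed.

Theorem proposition6p1 (R : realType) (n : nat)
  (s : seq ('I_n.+2 * 'I_n.+2)) :
  uniq s ->
  (forall i j : 'I_n.+2, ((i, j) \in s) = (i != j)) ->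
  exists Q N : nat, (0 < N)%N /\
    forall p : {poly int}, p \is monic -> size p = n.+3 ->
      \tr (companion n.+2 p) = 0 ->
      coset_fleeing Q (GammaN_orbit s N (companion n.+2 p)) /\
      hyperplane_fleeing R (GammaN_orbit s N (companion n.+2 p)).
Proof.
move=> _ s_pairs; exists (2 ^ (n.+2 * n.+2))%N, (size s * 7)%N.
split=> [|p _ _ _]; first by rewrite muln_gt0 (size_pairs_gt0 s_pairs).
split; [exact: companion_orbit_coset_fleeing | exact: companion_orbit_hyperplane_fleeing].
Qed.
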